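(* Let $a_{1}<a_{2}<a_{3}<\cdots$ be a strictly increasing infinite sequence of positive integers, let $A=\{a_{1},a_{2},a_{3},\ldots\}$, and let $n>0$ be an integer such that: (1) whenever $m>n$, there exist indices $i<r\leq s<j$ with $a_{m}=a_{i}+a_{j}=a_{r}+a_{s}$; and (2) whenever $a=a_{i}+a_{j}=a_{r}+a_{s}>a_{n}$ for some indices $i<r<s<j$, then $a=a_{m}$ for some $m>n$. Suppose $d,a,b$ are integers such that the five numbers $d,a,b,a+d,b+d$ are pairwise distinct and all belong to $A$, and suppose $a_{n}<k$ where $k=a+b+d$. Then every positive multiple of $k$ belongs to $A$, i.e., $mk\in A$ for all integers $m\geq 1$. *)

(* Plain MathComp (ssrnat). Sequences are 1-indexed: a : nat -> nat, only
   indices i >= 1 are meaningful; a 0 is ignored. *)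
From mathcomp Require Import all_boot.
Set Implicit Arguments. Unset Strict Implicit. Unset Printing Implicit Defensive.

Definition strictly_increasing_pos (a : nat -> nat) : Prop :=
  (forall i, 1 <= i -> 0 < a i) /\ (forall i j, 1 <= i -> i < j -> a i < a j).

Definition inA (a : nat -> nat) (x : nat) : Prop := exists i, 1 <= i /\ a i = x.

Definition cond1 (a : nat -> nat) (n : nat) : Prop :=
  forall m, n < m -> exists i r s j,
    [/\ 1 <= i, i < r, r <= s, s < j & a m = a i + a j /\ a m = a r + a s].

Definition cond2 (a : nat -> nat) (n : nat) : Prop :=
  forall i r s j, 1 <= i -> i < r -> r < s -> s < j ->
    a i + a j = a r + a s -> a n < a i + a j ->
    exists m, n < m /\ a m = a i + a j.

(* Write k = x + y + d; only condition (2) is needed.  It says that A contains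
   the outer sum p + s of any four elements p < q < r < s of A with
   p + s = q + r > a_n.  Assuming x < y, this applied to x, y, x + d, y + d
   (distinct since y <> x + d) gives k, and applied to d, x + d, y + d, k it gives
   k + d.  If c >= k and c, c + d lie in A, the quadruples (x, x + d, c, c + d)
   and (y, y + d, c, c + d) give c + x + d and c + y + d, and then
   (x, y, c + x + d, c + y + d) and (x + d, y + d, c + x + d, c + y + d) give
   c + k and c + k + d.  Induction on m yields m k (together with m k + d). *)
From mathcomp Require Import all_boot.
From mathcomp Require Import zify.

Set Implicit Arguments.
Unset Strict Implicit.
Unset Printing Implicit Defensive.

Section SumsInA.

Variables (a : nat -> nat) (n : nat).
Hypotheses (a_inc : strictly_increasing_pos a) (a_cond2 : cond2 a n).

Lemma inA_gt0 z : inA a z -> 0 < z.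
Proof. by case: a_inc => a_pos _ [i [i_gt0 <-]]; apply: a_pos. Qed.

Lemma ltn_index i j : 1 <= i -> 1 <= j -> a i < a j -> i < j.
Proof.
case: a_inc => _ a_lt i_gt0 j_gt0; rewrite (ltnNge i j); apply: contraTN.
by rewrite -leqNgt leq_eqVlt => /predU1P[->//|/(a_lt _ _ j_gt0)/ltnW].
Qed.

Lemma inA_outer_sum p q r s :
  inA a p -> inA a q -> inA a r -> inA a s -> p < q -> q < r -> r < s ->
  p + s = q + r -> a n < p + s -> inA a (p + s).
Proof.
move=> [i [i_gt0 <-]] [i' [i'_gt0 <-]] [j' [j'_gt0 <-]] [j [j_gt0 <-]].
move=> /(ltn_index i_gt0 i'_gt0) ii' /(ltn_index i'_gt0 j'_gt0) i'j'.
move=> /(ltn_index j'_gt0 j_gt0) j'j sum_eq sum_gt.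
have [m [nm <-]] := a_cond2 i_gt0 ii' i'j' j'j sum_eq sum_gt.
by exists m; split; first exact: leq_ltn_trans nm.
Qed.

Variables d x y : nat.
Hypotheses (Ad : inA a d) (Ax : inA a x) (Ay : inA a y).
Hypotheses (Axd : inA a (x + d)) (Ayd : inA a (y + d)).
Hypotheses (x_lt_y : x < y) (y_neq_xd : y != x + d) (an_lt_k : a n < x + y + d).

Local Notation k := (x + y + d).

Let d_gt0 : 0 < d := inA_gt0 Ad.
Let x_gt0 : 0 < x := inA_gt0 Ax.
Let y_gt0 : 0 < y := inA_gt0 Ay.

Lemma inA_sum_base : inA a k /\ inA a (k + d).
Proof.
have Ak : inA a k.
  rewrite -addnA; have [y_lt_xd | xd_lt_y | y_eq_xd] := ltngtP y (x + d).
  - by apply: (inA_outer_sum Ax Ay Axd Ayd); lia.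
  - by apply: (inA_outer_sum Ax Axd Ay Ayd); lia.
  - by move: y_neq_xd; rewrite y_eq_xd eqxx.
split=> //; rewrite addnC.
by apply: inA_outer_sum Ad Axd Ayd Ak _ _ _ _ _; lia.
Qed.

Lemma inA_sum_shift c : k <= c -> inA a c -> inA a (c + d) ->
  inA a (c + k) /\ inA a (c + k + d).
Proof.
move=> k_le_c Ac Acd.
have Acxd : inA a (c + x + d).
  rewrite -addnA addnCA; apply: inA_outer_sum Ax Axd Ac Acd _ _ _ _ _; lia.
have Acyd : inA a (c + y + d).
  rewrite -addnA addnCA; apply: inA_outer_sum Ay Ayd Ac Acd _ _ _ _ _; lia.
have -> : c + k = x + (c + y + d) by lia.
have -> : x + (c + y + d) + d = x + d + (c + y + d) by lia.
split; first by apply: (inA_outer_sum Ax Ay Acxd Acyd); lia.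
by apply: (inA_outer_sum Axd Ayd Acxd Acyd); lia.
Qed.

Lemma inA_mul_sum m : 0 < m -> inA a (m * k) /\ inA a (m * k + d).
Proof.
elim: m => [//|[_ _ | m IH _]]; first by rewrite mul1n; exact: inA_sum_base.
have [Amk Amkd] := IH isT.
by rewrite mulSnr; apply: inA_sum_shift; rewrite ?leq_pmull.
Qed.

End SumsInA.

Theorem lemma1 (a : nat -> nat) (n d x y : nat) :
  strictly_increasing_pos a -> 0 < n -> cond1 a n -> cond2 a n ->
  uniq [:: d; x; y; x + d; y + d] ->
  inA a d -> inA a x -> inA a y -> inA a (x + d) -> inA a (y + d) ->
  a n < x + y + d ->
  forall m, 1 <= m -> inA a (m * (x + y + d)).
Proof.
move=> a_inc _ _ a_cond2 uniq_dxy Ad Ax Ay Axd Ayd an_lt_k m m_gt0.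
move: uniq_dxy; rewrite /= !inE !negb_or.
move=> /and5P[_ /and3P[x_neq_y _ x_neq_yd] /andP[y_neq_xd _] _ _].
have [x_lt_y | y_lt_x | x_eq_y] := ltngtP x y.
- by case: (inA_mul_sum a_inc a_cond2 Ad Ax Ay Axd Ayd x_lt_y y_neq_xd an_lt_k m_gt0).
- rewrite [x + y]addnC in an_lt_k *.
  by case: (inA_mul_sum a_inc a_cond2 Ad Ay Ax Ayd Axd y_lt_x x_neq_yd an_lt_k m_gt0).
- by rewrite x_eq_y eqxx in x_neq_y.
Qed.
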